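(* For each $n\in\mathbb{N}$ there is a constant $C_n\ge1$ such that for every $s>0$ and every integer $k>1$, the finite group $\mathbb{Z}_k^n$ with the metric $d_k^n$ has a cover $\{\mathcal U_0,\dots,\mathcal U_n\}$ such that the $s$-scale connected components of each $\mathcal U_i$ have diameter at most $C_n s$.
   Context: $d_k$ is the canonical word metric on the cyclic group $\mathbb{Z}_k$ (with respect to the generator $\pm1$), i.e. $d_k(a,b)=\min\{|a-b| \bmod k,\ k-(|a-b|\bmod k)\}$, and $d_k^n((x_1,\dots,x_n),(y_1,\dots,y_n))=\sum_{i=1}^n d_k(x_i,y_i)$. For $s>0$, the $s$-scale connected components of a subset $U$ are the classes of the relation ''joined by a finite chain $x_0,\dots,x_m$ in $U$ with $d(x_i,x_{i+1})<s$''. *)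

From mathcomp Require Import all_boot.
From Stdlib Require Import Reals.

Set Implicit Arguments.
Unset Strict Implicit.
Unset Printing Implicit Defensive.

(* Canonical word metric on Z_k w.r.t. generator +-1:
   d_k(a,b) = min(|a-b| mod k, k - (|a-b| mod k)). *)
Definition dk (k : nat) (a b : 'I_k) : nat :=
  let m := (maxn a b - minn a b) %% k in minn m (k - m).

Definition ZkN (n k : nat) := {ffun 'I_n -> 'I_k}.

Definition dkn (n k : nat) (x y : ZkN n k) : nat :=
  \sum_(i < n) dk (x i) (y i).

Inductive schain (n k : nat) (U : {set ZkN n k}) (s : R) (x : ZkN n k)
  : ZkN n k -> Prop :=
| schain_refl : x \in U -> schain U s x x
| schain_step : forall y z, schain U s x y -> z \in U ->
    (INR (dkn y z) < s)%R -> schain U s x z.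

From mathcomp Require Import all_boot zify.
From Stdlib Require Import Reals Lra Psatz.

Set Implicit Arguments.
Unset Strict Implicit.
Unset Printing Implicit Defensive.

(* Fix an integer scale m > s and the period P = m (n+1).  Residues mod P are
   split into n+1 zones of length m; colour j removes zone j.  The piece U_j
   consists of the points none of whose coordinates lies in zone j; since a
   point has only n coordinates, some colour is missed, so the pieces cover.
   Within colour j, the positions of Z_k outside zone j fall into blocks of
   length < P separated by gaps of length m (the last and first blocks are
   glued around the cycle).  A step of length < s < m cannot jump a gap, so
   along an s-chain in U_j every coordinate stays in one glued block, whose
   diameter is < 3P.  Hence s-components have diameter <= 3 n P = 3 n(n+1) m.
   For s < 1 the steps have length 0 and one piece suffices. *)

(* A number t whose residue mod P avoids the last w residues lies in a block
   that already contains every multiple of P smaller than t + w. *)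
Lemma divn_gap_lower (P w t Q : nat) :
  t %% P < P - w -> Q * P < t + w -> Q <= t %/ P.
Proof.
move=> hr hQ; rewrite leqNgt; apply/negP => hlt.
have := leq_mul hlt (leqnn P); rewrite mulSn.
have := divn_eq t P; lia.
Qed.

Lemma dk_sym (k : nat) (a b : 'I_k) : dk a b = dk b a.
Proof. by rewrite /dk maxnC [minn (nat_of_ord b) _]minnC. Qed.

Lemma dk_ordered (k : nat) (a b : 'I_k) :
  a <= b -> dk a b = minn (b - a) (k - (b - a)).
Proof.
move=> ab; rewrite /dk (maxn_idPr ab) (minn_idPl ab) modn_small //.
have := ltn_ord b; lia.
Qed.

Lemma dk_refl (k : nat) (a : 'I_k) : dk a a = 0.
Proof. by rewrite dk_ordered // subnn min0n. Qed.

Lemma dk_eq0 (k : nat) (a b : 'I_k) : dk a b = 0 -> a = b.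
Proof.
wlog ab : a b / a <= b.
  move=> W e; case: (leqP a b) => [|/ltnW] h; first exact: W.
  by apply/esym/W; rewrite // dk_sym.
rewrite dk_ordered // => e; apply: val_inj => /=.
have := ltn_ord b; move: e; rewrite /minn; case: ifP => _; lia.
Qed.

Lemma dk_le_dkn (n k : nat) (x y : ZkN n k) (i : 'I_n) :
  dk (x i) (y i) <= dkn x y.
Proof. by rewrite /dkn (bigD1 i) //= leq_addr. Qed.

Lemma dkn_refl (n k : nat) (x : ZkN n k) : dkn x x = 0.
Proof. by rewrite /dkn big1 // => i _; rewrite dk_refl. Qed.

Lemma dkn_eq0 (n k : nat) (x y : ZkN n k) : dkn x y = 0 -> x = y.
Proof.
move=> e; apply/ffunP => i; apply: dk_eq0.
by have := dk_le_dkn x y i; rewrite e leqn0 => /eqP.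
Qed.

(* Positions a of Z_k are cut into blocks of length P at the
   points where a + sh is a multiple of P; the last w positions of each block
   form its gap.  The label of a position is its block, except that the blocks
   reaching the end of Z_k are glued to block 0 around the cycle. *)
Section Circle.
Variables (P w sh k : nat).
Hypothesis P_gt0 : 0 < P.
Hypothesis shift_gap : sh + w <= P.

Definition block (a : nat) : nat := (a + sh) %/ P.
Definition outside_gap (a : nat) : bool := (a + sh) %% P < P - w.
Definition label (a : nat) : nat := if k %/ P <= block a then 0 else block a.

Lemma block_mono (a b : nat) : a <= b -> block a <= block b.
Proof. by move=> ab; rewrite /block leq_div2r // leq_add2r. Qed.

Lemma block_step (a b : nat) : outside_gap a -> a <= b -> b < a + w ->
  block a = block b.
Proof.
move=> ha ab ba; apply/eqP; rewrite eqn_leq block_mono //=.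
apply: divn_gap_lower ha _; rewrite (leq_ltn_trans (leq_divM _ _)) //.
lia.
Qed.

Lemma label_end (b : nat) : outside_gap b -> k < b + w -> label b = 0.
Proof.
move=> hb kb; rewrite /label (divn_gap_lower hb) //.
by rewrite (leq_ltn_trans (leq_divM _ _)) //; lia.
Qed.

Lemma label_start (a : nat) : a < w -> label a = 0.
Proof.
move=> aw; rewrite /label /block (@divn_small (a + sh)) ?if_same //.
by have := shift_gap; lia.
Qed.

Lemma label_step (a b : 'I_k) : outside_gap a -> outside_gap b ->
  dk a b < w -> label a = label b.
Proof.
wlog ab : a b / a <= b.
  move=> W ha hb d; case: (leqP a b) => [|/ltnW] h; first exact: W.
  by apply/esym/W; rewrite // dk_sym.
move=> ha hb; rewrite dk_ordered // gtn_min => /orP [d | d].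
  by rewrite /label (block_step ha ab) //; lia.
have bk := ltn_ord b.
by rewrite label_start ?(label_end hb) //; lia.
Qed.

Lemma label_diam (a b : 'I_k) : label a = label b -> dk a b < 3 * P.
Proof.
wlog ab : a b / a <= b.
  move=> W e; case: (leqP a b) => [|/ltnW] h; first exact: W.
  by rewrite dk_sym; apply: W.
have bk := ltn_ord b; have kQ := ltn_ceil k P_gt0; have shP := shift_gap.
have high (c : nat) : k %/ P <= block c -> k %/ P * P <= c + sh.
  by rewrite /block leq_divRL.
have same (c d : nat) : block c = block d -> c <= d -> d - c < P.
  move=> e cd; have := ltn_ceil (d + sh) P_gt0; rewrite -/(block d) -e.
  have := leq_divM (c + sh) P; rewrite -/(block c); lia.
have bab := block_mono ab.
rewrite dk_ordered // gtn_min /label; case: ifP => ha; case: ifP => hb e.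
- by have := high _ ha; lia.
- by move: hb; rewrite (leq_trans ha bab).
- have := high _ hb; have := ltn_ceil (a + sh) P_gt0; rewrite -/(block a) -e.
  lia.
- by have := same _ _ e ab; lia.
Qed.

End Circle.

Lemma missed_colour (n : nat) (f : 'I_n -> 'I_n.+1) :
  exists j, forall i, f i != j.
Proof.
have [j hj | hall] := pickP (fun j => j \notin codom f).
  by exists j => i; apply: contraNneq hj => <-; exact: codom_f.
have : #|'I_n.+1| <= #|codom f|.
  by apply/subset_leq_card/subsetP => j _; apply/negbFE/hall.
rewrite card_ord => /leq_trans/(_ (card_size _)).
by rewrite size_codom card_ord ltnn.
Qed.

Section Pieces.
Variables (n m k : nat).
Hypothesis m_gt0 : 0 < m.

Definition period : nat := m * n.+1.

Definition zone (a : nat) : 'I_n.+1 := inord ((a %% period) %/ m).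

(* The shift making zone j the gap at the end of each block. *)
Definition gap_shift (j : 'I_n.+1) : nat := period - m * j.+1.

Definition piece (j : 'I_n.+1) : {set ZkN n k} :=
  [set x : ZkN n k | [forall i : 'I_n, zone (x i) != j]].

Definition piece_label (j : 'I_n.+1) (x : ZkN n k) : {ffun 'I_n -> nat} :=
  [ffun i => label period (gap_shift j) k (x i)].

Lemma period_gt0 : 0 < period.
Proof. by rewrite muln_gt0 m_gt0. Qed.

Lemma gap_shift_bound (j : 'I_n.+1) : gap_shift j + m <= period.
Proof.
have : m * j.+1 <= period by rewrite leq_pmul2l // ltn_ord.
by rewrite /gap_shift; lia.
Qed.

Lemma zone_outside (j : 'I_n.+1) (a : nat) :
  zone a != j -> outside_gap period m (gap_shift j) a.
Proof.
have jP : m * j.+1 <= period by rewrite leq_pmul2l // ltn_ord.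
have rP : a %% period < period by exact: ltn_pmod period_gt0.
have rz : (a %% period) %/ m < n.+1 by rewrite ltn_divLR // mulnC.
rewrite /zone -(inj_eq val_inj) /= inordK // eqn_leq -ltnS ltn_divLR //.
rewrite leq_divRL // negb_and -leqNgt -ltnNge mulnC [j * m]mulnC.
rewrite /outside_gap -modnDml /gap_shift => /orP [r_hi | r_lo].
  have -> : a %% period + (period - m * j.+1) = a %% period - m * j.+1 + period.
    by lia.
  by rewrite modnDr modn_small; lia.
by rewrite modn_small; lia.
Qed.

Lemma piece_cover (x : ZkN n k) : exists j, x \in piece j.
Proof.
have [j hj] := missed_colour (fun i => zone (x i)).
by exists j; rewrite inE; apply/forallP.
Qed.

Lemma piece_step (j : 'I_n.+1) (x y : ZkN n k) :
  x \in piece j -> y \in piece j -> dkn x y < m ->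
  piece_label j x = piece_label j y.
Proof.
rewrite !inE => /forallP hx /forallP hy d; apply/ffunP => i; rewrite !ffunE.
apply: (label_step period_gt0 (gap_shift_bound j)); rewrite ?zone_outside //.
exact: leq_ltn_trans (dk_le_dkn x y i) d.
Qed.

Lemma piece_diam (j : 'I_n.+1) (x y : ZkN n k) :
  piece_label j x = piece_label j y -> dkn x y <= n * (3 * period).
Proof.
move=> e; have -> : n * (3 * period) = \sum_(i < n) 3 * period.
  by rewrite sum_nat_const card_ord.
apply: leq_sum => i _.
apply/ltnW/(label_diam period_gt0 (gap_shift_bound j)).
by move/ffunP: e => /(_ i); rewrite !ffunE.
Qed.

End Pieces.

Lemma schain_in (n k : nat) (U : {set ZkN n k}) (s : R) (x y : ZkN n k) :
  schain U s x y -> y \in U.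
Proof. by case. Qed.

Lemma schain_invariant (T : Type) (n k : nat) (U : {set ZkN n k}) (s : R)
    (f : ZkN n k -> T) :
  (forall y z, y \in U -> z \in U -> (INR (dkn y z) < s)%R -> f y = f z) ->
  forall x y, schain U s x y -> f x = f y.
Proof.
move=> hf x y; elim=> [//| y' z hxy IH hz d].
by rewrite IH; apply: hf (schain_in hxy) hz d.
Qed.

Lemma integer_scale (s : R) : (1 <= s)%R ->
  exists m : nat, (0 < m)%N /\ (s < INR m)%R /\ (INR m <= s + 1)%R.
Proof.
move=> s1; have [up1 up2] := archimed s.
have up0 : (0 <= up s)%Z by apply: le_IZR; lra.
have Em : INR (Z.to_nat (up s)) = IZR (up s).
  by rewrite INR_IZR_INZ Znat.Z2Nat.id.
exists (Z.to_nat (up s)); rewrite Em; split; last lra.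
by apply/ltP/INR_lt; rewrite Em /=; lra.
Qed.

Theorem lemma4p9 :
  forall n : nat, exists C : R, (1 <= C)%R /\
    forall (s : R) (k : nat), (0 < s)%R -> (1 < k)%N ->
      exists U : 'I_n.+1 -> {set ZkN n k},
        (forall x : ZkN n k, exists i : 'I_n.+1, x \in U i) /\
        (forall (i : 'I_n.+1) (x y : ZkN n k),
            schain (U i) s x y -> (INR (dkn x y) <= C * s)%R).
Proof.
move=> n; have N0 := pos_INR (n * n.+1).
exists (6 * INR (n * n.+1) + 1)%R; split; first lra.
move=> s k s0 _; case: (Rlt_le_dec s 1) => hs.
- (* Below scale 1 steps have length 0, so chains are constant. *)
  exists (fun _ => setT); split => [x | i x y hxy].
    by exists ord0; rewrite inE.
  have step (u v : ZkN n k) : u \in setT -> v \in setT ->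
      (INR (dkn u v) < s)%R -> u = v.
    move=> _ _ d; apply: dkn_eq0; apply/eqP; rewrite -leqn0 -ltnS.
    by apply/ltP/INR_lt; rewrite /=; lra.
  by rewrite -(schain_invariant step hxy) dkn_refl /=; nra.
- (* At scale s >= 1 use the pieces at an integer scale m in (s, s + 1]. *)
  have [m [m0 [sm ms]]] := integer_scale hs.
  exists (piece m k); split => [|j x y hxy]; first exact: piece_cover.
  have step (u v : ZkN n k) : u \in piece m k j -> v \in piece m k j ->
      (INR (dkn u v) < s)%R -> piece_label m j u = piece_label m j v.
    move=> hu hv d; apply: piece_step => //.
    by apply/ltP/INR_lt; lra.
  have := piece_diam m0 (schain_invariant step hxy).
  have -> : n * (3 * period n m) = 3 * (n * n.+1) * m by rewrite /period; nia.
  move=> /leP/le_INR; rewrite 2!mult_INR.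
  move: (INR (n * n.+1)) N0 => N N0; rewrite /=; nra.
Qed.
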